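(* Let $G=(X,\Sigma,\longrightarrow,X_0)$ be a plant, $R_i=(Z_i,\Sigma,\longrightarrow,Z_{0i})$ ($i=1,2$) specifications with $R_1\sqsubseteq R_2$, and $\Sigma'=\{\sigma\in\Sigma:z_1\xrightarrow{\sigma}\text{ in }R_1\text{ for some }z_1\in Z_1\}$. Take $\Sigma_r=\Sigma'$ and let $S\in\mathit{SPR}(G,R_2)$. If there exists a cc-simulation $\Phi$ from $S\|G$ to $R_2$ such that $\Phi^{-1}$ is a simulation from $R_2$ to $S\|G$ w.r.t. $\Sigma'$, then $S\in S(R_1,G,R_2)$. In particular, $\mathit{SPR}(G,R_2)\subseteq S(R_1,G,R_2)$ whenever $|Z_{02}|=1$.
   Context: An automaton is a 4-tuple $A=(Q,\Sigma,\longrightarrow,Q_0)$ with state set $Q$, finite event set $\Sigma$, ${\longrightarrow}\subseteq Q\times\Sigma\times Q$ and $\emptyset\neq Q_0\subseteq Q$. Write $q\xrightarrow{\sigma}q'$ for $(q,\sigma,q')\in{\longrightarrow}$, $q\xrightarrow{\sigma}$ if some such $q'$ exists; extend to strings. A state is reachable if reached from an initial state by some string. Events are partitioned into uncontrollable $\Sigma_{uc}$ and controllable $\Sigma_c$; $\Sigma_r\subseteq\Sigma$ denotes the set of required events. For a supervisor $S=(Y,\Sigma,\longrightarrow,Y_0)$, $S\|G=(Y\times X,\Sigma,\longrightarrow,Y_0\times X_0)$ with $(y,x)\xrightarrow{\sigma}(y',x')$ iff $y\xrightarrow{\sigma}y'$ and $x\xrightarrow{\sigma}x'$; $S$ is $\Sigma_{uc}$-admissible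 w.r.t. $G$ if for every reachable $(y,x)$ of $S\|G$ and $\sigma\in\Sigma_{uc}$, $x\xrightarrow{\sigma}$ implies $(y,x)\xrightarrow{\sigma}$. For automata $A_1,A_2$ (state sets $Q_1,Q_2$, initial sets $Q_{01},Q_{02}$) and $\Sigma''\subseteq\Sigma$, $\Phi\subseteq Q_1\times Q_2$ is a simulation w.r.t. $\Sigma''$ if (initial state) every $q_0\in Q_{01}$ has $p_0\in Q_{02}$ with $(q_0,p_0)\in\Phi$ and (forward) for $(q,p)\in\Phi$, $\sigma\in\Sigma''$, $q\xrightarrow{\sigma}q'$ there is $p'$ with $p\xrightarrow{\sigma}p'$, $(q',p')\in\Phi$; a simulation is a simulation w.r.t. $\Sigma$; a cc-simulation is a simulation that also satisfies ($\Sigma_r$-backward): for $(q,p)\in\Phi$, $\sigma\in\Sigma_r$, $p\xrightarrow{\sigma}p'$ there is $q'$ with $q\xrightarrow{\sigma}q'$, $(q',p')\in\Phi$. $A_1\sqsubseteq A_2$, $A_1\sqsubseteq_{cc}A_2$ mean such relations exist; $\Phi^{-1}=\{(p,q):(q,p)\in\Phi\}$. $\mathit{SPR}(G,R)$ is the set of $\Sigma_{uc}$-admissible supervisors $S$ with $S\|G\sqsubseteq_{cc}R$. $S(R_1,G,R_2)$ is the set of all $\Sigma_{uc}$-admissible supervisors $S$ with $R_1\sqsubseteq S\|G\sqsubseteq R_2$ (the $\Sigma_{uc}$-admissible solutions of the $(R_1,G,R_2)$-range control problem). *)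

From mathcomp Require Import all_boot.

Set Implicit Arguments.
Unset Strict Implicit.
Unset Printing Implicit Defensive.

Record automaton (E : finType) := Automaton {
  st : Type;
  trans : st -> E -> st -> Prop;
  init : st -> Prop;
  init_ne : exists q, init q
}.
Arguments st {E} a.
Arguments trans {E} a _ _ _.
Arguments init {E} a _.

Section Defs.
Variable E : finType.

Inductive reachable (A : automaton E) : st A -> Prop :=
| reach_init q : init A q -> @reachable A q
| reach_step q s q' : @reachable A q -> trans A q s q' -> @reachable A q'.
Arguments reachable : clear implicits.

Definition par_init (S G : automaton E) : exists p : st S * st G,
    init S p.1 /\ init G p.2.
Proof.
case: (init_ne S) => y Hy; case: (init_ne G) => x Hx.
by exists (y, x).
Qed.

Definition par (S G : automaton E) : automaton E :=
  @Automaton E (st S * st G)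
    (fun p s p' => trans S p.1 s p'.1 /\ trans G p.2 s p'.2)
    (fun p => init S p.1 /\ init G p.2)
    (par_init S G).

(* Sigma_uc-admissibility of supervisor S w.r.t. plant G;
   Euc is the set of uncontrollable events. *)
Definition admissible (Euc : (E -> Prop)) (S G : automaton E) : Prop :=
  forall (y : st S) (x : st G), reachable (par S G) (y, x) ->
  forall s, Euc s -> (exists x', trans G x s x') ->
  exists p', trans (par S G) (y, x) s p'.

Definition simulation_wrt (E'' : (E -> Prop)) (A1 A2 : automaton E)
  (Phi : st A1 -> st A2 -> Prop) : Prop :=
  (forall q0, init A1 q0 -> exists p0, init A2 p0 /\ Phi q0 p0) /\
  (forall q p, Phi q p -> forall s, E'' s -> forall q', trans A1 q s q' ->
     exists p', trans A2 p s p' /\ Phi q' p').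

Definition simulation (A1 A2 : automaton E) (Phi : st A1 -> st A2 -> Prop) :=
  simulation_wrt (fun _ => True) Phi.

Definition cc_simulation (Er : (E -> Prop)) (A1 A2 : automaton E)
  (Phi : st A1 -> st A2 -> Prop) : Prop :=
  simulation Phi /\
  (forall q p, Phi q p -> forall s, Er s -> forall p', trans A2 p s p' ->
     exists q', trans A1 q s q' /\ Phi q' p').

Definition simulated (A1 A2 : automaton E) : Prop :=
  exists Phi : st A1 -> st A2 -> Prop, simulation Phi.

Definition cc_simulated (Er : (E -> Prop)) (A1 A2 : automaton E) : Prop :=
  exists Phi : st A1 -> st A2 -> Prop, cc_simulation Er Phi.

Definition inverse (A1 A2 : automaton E) (Phi : st A1 -> st A2 -> Prop) :
  st A2 -> st A1 -> Prop := fun p q => Phi q p.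

Definition SPR (Euc Er : (E -> Prop)) (G R S : automaton E) : Prop :=
  admissible Euc S G /\ cc_simulated Er (par S G) R.

Definition range_sol (Euc : (E -> Prop)) (R1 G R2 S : automaton E) : Prop :=
  admissible Euc S G /\ simulated R1 (par S G) /\ simulated (par S G) R2.

Definition enabled_events (R1 : automaton E) : (E -> Prop) :=
  fun s => exists z1 z1', trans R1 z1 s z1'.

End Defs.

From mathcomp Require Import all_boot.

(* R1 is simulated by S || G through R2: compose a simulation of R1 by R2 with
   the inverse of Phi.  The inverse only needs to simulate the events of Sigma',
   because R1 never takes any other event.  When R2 has a single initial state,
   the Sigma'-backward clause of a cc-simulation already makes its inverse such
   a simulation. *)

Set Implicit Arguments.
Unset Strict Implicit.
Unset Printing Implicit Defensive.

Section Simulations.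
Variable E : finType.
Implicit Types (A B C : automaton E) (Ev : E -> Prop).

Definition rel_comp A B C (Psi : st A -> st B -> Prop) (Phi : st B -> st C -> Prop) :
  st A -> st C -> Prop := fun a c => exists b, Psi a b /\ Phi b c.

Lemma simulation_wrtW Ev1 Ev2 A B (Phi : st A -> st B -> Prop) :
  (forall s, Ev1 s -> Ev2 s) -> simulation_wrt Ev2 Phi -> simulation_wrt Ev1 Phi.
Proof.
move=> sub12 [Phi_init Phi_step]; split=> // q p Pqp s /sub12; exact: Phi_step.
Qed.

Lemma simulation_wrt_comp Ev A B C (Psi : st A -> st B -> Prop)
    (Phi : st B -> st C -> Prop) :
  simulation_wrt Ev Psi -> simulation_wrt Ev Phi ->
  simulation_wrt Ev (rel_comp Psi Phi).
Proof.
move=> [Psi_init Psi_step] [Phi_init Phi_step]; split.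
- move=> a0 /Psi_init [b0 [b0_init Pa0b0]].
  have [c0 [c0_init Pb0c0]] := Phi_init b0 b0_init.
  by exists c0; split => //; exists b0.
- move=> a c [b [Pab Pbc]] s Ev_s a' a_s_a'.
  have [b' [b_s_b' Pa'b']] := Psi_step a b Pab s Ev_s a' a_s_a'.
  have [c' [c_s_c' Pb'c']] := Phi_step b c Pbc s Ev_s b' b_s_b'.
  by exists c'; split => //; exists b'.
Qed.

Lemma simulation_enabled A B (Phi : st A -> st B -> Prop) :
  simulation_wrt (enabled_events A) Phi -> simulation Phi.
Proof.
move=> [Phi_init Phi_step]; split=> // q p Pqp s _ q' q_s_q'.
by apply: (Phi_step q p Pqp s) => //; exists q, q'.
Qed.

Lemma simulated_comp_enabled A B C (Phi : st B -> st C -> Prop) :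
  simulated A B -> simulation_wrt (enabled_events A) Phi -> simulated A C.
Proof.
move=> [Psi PsiS] PhiS; exists (rel_comp Psi Phi); apply: simulation_enabled.
by apply: simulation_wrt_comp PhiS; apply: simulation_wrtW PsiS.
Qed.

Lemma cc_simulation_inverse_init1 Er A B (Phi : st A -> st B -> Prop) :
  (exists p0 : st B, forall p, init B p <-> p = p0) ->
  cc_simulation Er Phi -> simulation_wrt Er (inverse Phi).
Proof.
move=> [p0 init_p0] [[Phi_init _] Phi_back]; split=> [p /init_p0 -> | p q Pqp].
- have [q0 q0_init] := init_ne A.
  have [_ [/init_p0 -> Pq0p0]] := Phi_init q0 q0_init.
  by exists q0.
- exact: Phi_back.
Qed.

End Simulations.

Lemma SPR_range_sol (E : finType) (Euc : E -> Prop) (G R1 R2 S : automaton E)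
    (Phi : st (par S G) -> st R2 -> Prop) :
  simulated R1 R2 -> SPR Euc (enabled_events R1) G R2 S ->
  cc_simulation (enabled_events R1) Phi ->
  simulation_wrt (enabled_events R1) (inverse Phi) ->
  range_sol Euc R1 G R2 S.
Proof.
move=> R12 [admS _] [PhiS _] PhiinvS; split=> //; split; last by exists Phi.
exact: simulated_comp_enabled PhiinvS.
Qed.

Theorem proposition3 (E : finType) (Euc : E -> Prop) (G R1 R2 : automaton E) :
  simulated R1 R2 ->
  (forall S : automaton E,
     SPR Euc (enabled_events R1) G R2 S ->
     (exists Phi : st (par S G) -> st R2 -> Prop,
        cc_simulation (enabled_events R1) Phi /\
        simulation_wrt (enabled_events R1) (inverse Phi)) ->
     range_sol Euc R1 G R2 S) /\
  ((exists z0 : st R2, forall z, init R2 z <-> z = z0) ->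
   forall S : automaton E,
     SPR Euc (enabled_events R1) G R2 S -> range_sol Euc R1 G R2 S).
Proof.
move=> R12; split.
- by move=> S SPR_S [Phi [PhiS PhiinvS]]; exact: SPR_range_sol PhiinvS.
- move=> init1 S SPR_S; have [_ [Phi PhiS]] := SPR_S.
  apply: (SPR_range_sol R12 SPR_S PhiS).
  exact: cc_simulation_inverse_init1 PhiS.
Qed.
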